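(* The complexity measure $M$ is downward non-increasing: for every affine subspace $U\subseteq\mathbb{F}_2^n$, every function $f:U\to\mathbb{F}_2$, and every affine subspace $W\subseteq U$, we have $M(f|_W)\le M(f)$, where $f|_W$ denotes the restriction of $f$ to $W$.
   Context: For an affine subspace $V\subseteq\mathbb{F}_2^n$ with $t=\dim V$ and a function $g:V\to\mathbb{F}_2$, choose an affine map $L:\mathbb{F}_2^t\to\mathbb{F}_2^n$ with $L(\mathbb{F}_2^t)=V$ (so $L$ is a bijection onto $V$), and define $G:(\mathbb{F}_2^t)^4\to\mathbb{F}_2$ by $G(x_1,x_2,x_3,x_4)=g(L(x_1+x_2+x_3+x_4))$. Then $M(g)$ is defined as $\mathrm{CC}_4(G)$; this does not depend on the choice of $L$. Here $\mathrm{CC}_4(G)$ is the deterministic number-in-hand multiparty communication complexity of $G$ in the blackboard model: $4$ players, player $P_i$ holds $x_i$, every message is written on a blackboard visible to all, and $\mathrm{CC}_4(G)$ is the least number of bits communicated in the worst case by a deterministic protocol computing $G$ correctly on all inputs. *)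

From HB Require Import structures.
From mathcomp Require Import all_boot all_order all_algebra.
From Stdlib Require Import ClassicalEpsilon.
Set Implicit Arguments. Unset Strict Implicit. Unset Printing Implicit Defensive.
Import GRing.Theory.
Local Open Scope ring_scope.

(* PNode i m p0 p1 : player i writes the bit m (x i) on the blackboard (it depends
   on the player's own input; the dependence on the transcript so far is encoded
   by the position in the tree); continue with p0 if the bit is false, p1 if true. *)
Inductive proto (k : nat) (X Y : Type) : Type :=
| PLeaf of Y
| PNode of 'I_k & (X -> bool) & proto k X Y & proto k X Y.

Fixpoint prun k X Y (p : proto k X Y) (x : 'I_k -> X) : Y :=
  match p with
  | PLeaf y => y
  | PNode i m p0 p1 => if m (x i) then prun p1 x else prun p0 x
  end.

Fixpoint plen k X Y (p : proto k X Y) (x : 'I_k -> X) : nat :=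
  match p with
  | PLeaf _ => 0
  | PNode i m p0 p1 => (if m (x i) then plen p1 x else plen p0 x).+1
  end.

Definition computes k (X : finType) Y (p : proto k X Y)
  (G : {ffun 'I_k -> X} -> Y) : Prop :=
  forall x : {ffun 'I_k -> X}, prun p x = G x.

Definition pcost k (X : finType) Y (p : proto k X Y) : nat :=
  (\max_(x : {ffun 'I_k -> X}) plen p x)%N.

Definition CC_le k (X : finType) Y (G : {ffun 'I_k -> X} -> Y) (d : nat) : Prop :=
  exists p : proto k X Y, computes p G /\ (pcost p <= d)%N.

Definition CC_le_b k (X : finType) Y (G : {ffun 'I_k -> X} -> Y) (d : nat) : bool :=
  if excluded_middle_informative (CC_le G d) then true else false.

(* CC_k(G): the least worst-case cost of a protocol computing G
   (the fallback value 0 is never used: a correct protocol always exists). *)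
Definition CC k (X : finType) Y (G : {ffun 'I_k -> X} -> Y) : nat :=
  match excluded_middle_informative (exists d, CC_le_b G d) with
  | left h => ex_minn h
  | right _ => 0%N
  end.

Definition F2vec n := 'rV['F_2]_n.

Definition affine_dim n (V : {set F2vec n}) (t : nat) : Prop :=
  exists (a : F2vec n) (S : {vspace F2vec n}),
    V = [set a + v | v in S] /\ \dim S = t.

Definition affine_subspace n (V : {set F2vec n}) : Prop :=
  exists t, affine_dim V t.

Definition affine_param n t (V : {set F2vec n}) (A : 'M['F_2]_(t, n)) (b : F2vec n)
  : Prop :=
  injective (fun x : F2vec t => x *m A + b) /\
  [set x *m A + b | x : F2vec t] = V.

(* M(g) for g : V -> F_2 (represented as a total function on F_2^n; only its
   values on V matter): CC_4 of G(x1,..,x4) = g(L(x1+x2+x3+x4)) for a chosen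
   affine bijection L : F_2^(dim V) -> V. *)
Definition M n (V : {set F2vec n}) (g : F2vec n -> 'F_2) : nat :=
  match excluded_middle_informative
          (exists t (A : 'M['F_2]_(t, n)) (b : F2vec n),
              affine_dim V t /\ affine_param V A b) with
  | left h =>
      let (t, h1) := constructive_indefinite_description _ h in
      let (A, h2) := constructive_indefinite_description _ h1 in
      let (b, _) := constructive_indefinite_description _ h2 in
      CC (fun x : {ffun 'I_4 -> F2vec t} => g ((\sum_(i < 4) x i) *m A + b))
  | right _ => 0%N
  end.

(* Parametrize W and U as images of affine injections L_W and L_U. Since
   W ⊆ U, L_W factors as L_U ∘ (x ↦ x T + c) for an affine map of the
   parameter spaces. The sum x1 + ... + x4 is linear, so
   (x1 + ... + x4) T + c = (x1 T + c) + x2 T + x3 T + x4 T: each player can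
   apply its share of this map to its own input and then run an optimal
   protocol for f ∘ L_U, so CC(f ∘ L_W) <= CC(f ∘ L_U). *)
From HB Require Import structures.
From mathcomp Require Import all_boot all_order all_algebra.
From Stdlib Require Import ClassicalEpsilon.
Set Implicit Arguments. Unset Strict Implicit. Unset Printing Implicit Defensive.
Import GRing.Theory.

Section Protocols.
Variables (k : nat) (X X' : finType) (Y : Type).

Lemma prun_ext (p : proto k X Y) (x x' : 'I_k -> X) :
  x =1 x' -> prun p x = prun p x'.
Proof. by move=> e; elim: p => //= i m p0 IH0 p1 IH1; rewrite e IH0 IH1. Qed.

Lemma plen_ext (p : proto k X Y) (x x' : 'I_k -> X) :
  x =1 x' -> plen p x = plen p x'.
Proof. by move=> e; elim: p => //= i m p0 IH0 p1 IH1; rewrite e IH0 IH1. Qed.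

Fixpoint proto_precomp (phi : 'I_k -> X' -> X) (p : proto k X Y) : proto k X' Y :=
  match p with
  | PLeaf y => PLeaf _ _ y
  | PNode i m p0 p1 =>
      PNode i (fun v => m (phi i v)) (proto_precomp phi p0) (proto_precomp phi p1)
  end.

Lemma prun_precomp phi p (y : 'I_k -> X') :
  prun (proto_precomp phi p) y = prun p (fun i => phi i (y i)).
Proof. by elim: p => //= i m p0 IH0 p1 IH1; rewrite IH0 IH1. Qed.

Lemma plen_precomp phi p (y : 'I_k -> X') :
  plen (proto_precomp phi p) y = plen p (fun i => phi i (y i)).
Proof. by elim: p => //= i m p0 IH0 p1 IH1; rewrite IH0 IH1. Qed.

Lemma CC_le_precomp (G : {ffun 'I_k -> X} -> Y) (G' : {ffun 'I_k -> X'} -> Y)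
    (phi : 'I_k -> X' -> X) d :
  (forall y, G' y = G [ffun i => phi i (y i)]) -> CC_le G d -> CC_le G' d.
Proof.
move=> eG [p [cp hp]]; exists (proto_precomp phi p); split.
  by move=> y; rewrite eG -cp prun_precomp; apply: prun_ext => i; rewrite ffunE.
apply: leq_trans hp; apply/bigmax_leqP => y _.
rewrite plen_precomp (plen_ext _ (x' := [ffun i => phi i (y i)])).
  exact: leq_bigmax.
by move=> i; rewrite ffunE.
Qed.

(* The context records the answers [x i == v] = b to the queries made so far. *)
Definition consistent (x : 'I_k -> X) (ctx : seq ('I_k * X * bool)) :=
  all (fun q => (x q.1.1 == q.1.2) == q.2) ctx.

Fixpoint query_proto (G : {ffun 'I_k -> X} -> Y) (y0 : Y) (qs : seq ('I_k * X))
    (ctx : seq ('I_k * X * bool)) : proto k X Y :=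
  match qs with
  | [::] => PLeaf _ _ (if [pick x : {ffun 'I_k -> X} | consistent x ctx] is Some x
                      then G x else y0)
  | q :: qs' => PNode q.1 (fun v => v == q.2)
                  (query_proto G y0 qs' ((q, false) :: ctx))
                  (query_proto G y0 qs' ((q, true) :: ctx))
  end.

Lemma prun_query_proto G y0 qs ctx (x : {ffun 'I_k -> X}) :
    consistent x ctx ->
    (forall i, (i, x i) \in qs \/ (i, x i, true) \in ctx) ->
  prun (query_proto G y0 qs ctx) x = G x.
Proof.
elim: qs ctx => [|q qs IH] ctx /= cx cov.
  case: pickP => [x' cx'|]; last by move/(_ x); rewrite cx.
  congr G; apply/ffunP => i.
  have [//|hin] := cov i.
  by move/allP: cx' => /(_ _ hin) /= /eqP/eqP.
have cov' b : (x q.1 == q.2) = b ->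
    forall i, (i, x i) \in qs \/ (i, x i, true) \in (q, b) :: ctx.
  move=> hq i; case: (cov i) => [|h]; last by right; rewrite in_cons h orbT.
  rewrite in_cons => /orP [/eqP eq|h]; last by left.
  by right; rewrite in_cons -hq -eq /= !eqxx.
by case: ifP => hq; apply: IH; rewrite /consistent /= ?hq ?eqxx //; apply: cov'.
Qed.

Lemma CC_le_exists (G : {ffun 'I_k -> X} -> Y) (y0 : Y) : exists d, CC_le G d.
Proof.
pose p := query_proto G y0 (enum (@predT ('I_k * X))) [::].
exists (pcost p), p; split => // x.
by apply: prun_query_proto => // i; left; rewrite mem_enum.
Qed.

Lemma CC_leq (G : {ffun 'I_k -> X} -> Y) d : CC_le G d -> CC G <= d.
Proof.
move=> h; rewrite /CC; case: excluded_middle_informative => [e|[]].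
  by case: ex_minnP => m _; apply; rewrite /CC_le_b; case: excluded_middle_informative.
by exists d; rewrite /CC_le_b; case: excluded_middle_informative.
Qed.

Lemma CC_leCC (G : {ffun 'I_k -> X} -> Y) (y0 : Y) : CC_le G (CC G).
Proof.
have [d hd] := CC_le_exists G y0.
rewrite /CC; case: excluded_middle_informative => [e|[]].
  by case: ex_minnP => m; rewrite /CC_le_b; case: excluded_middle_informative.
by exists d; rewrite /CC_le_b; case: excluded_middle_informative.
Qed.

End Protocols.

Lemma CC_precomp k (X X' : finType) Y
    (G : {ffun 'I_k -> X} -> Y) (G' : {ffun 'I_k -> X'} -> Y) (phi : 'I_k -> X' -> X) (y0 : Y) :
  (forall y, G' y = G [ffun i => phi i (y i)]) -> CC G' <= CC G.
Proof. by move=> eG; apply: CC_leq (CC_le_precomp eG (CC_leCC G y0)). Qed.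

Local Open Scope ring_scope.

Section AffineParametrizations.
Variables (F : finFieldType) (n : nat).

Lemma affine_param_exists (V : {set 'rV[F]_n}) (a : 'rV[F]_n) (S : {vspace 'rV[F]_n}) :
    V = [set a + v | v in S] ->
  exists (A : 'M[F]_(\dim S, n)) (b : 'rV[F]_n),
    injective (fun x : 'rV_(\dim S) => x *m A + b) /\
    [set x *m A + b | x : 'rV_(\dim S)] = V.
Proof.
move=> ->; pose A : 'M[F]_(\dim S, n) := \matrix_(i < \dim S) (vbasis S)`_i.
have mA (x : 'rV_(\dim S)) : x *m A = \sum_i x 0 i *: (vbasis S)`_i.
  by rewrite mulmx_sum_row; apply: eq_bigr => i _; rewrite rowK.
exists A, a; split.
  move=> x y /addIr /eqP; rewrite -subr_eq0 -mulmxBl mA => /eqP h.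
  move/freeP: (basis_free (vbasisP S)) => /(_ _ h) h0.
  by apply/rowP => j; have := h0 j; rewrite !mxE; apply: subr0_eq.
apply/setP => v; apply/imsetP/imsetP => -[x xS ->].
  exists (x *m A); last by rewrite addrC.
  rewrite mA; apply: memv_suml => i _; apply/memvZ/vbasis_mem.
  by apply: mem_nth; rewrite size_tuple.
exists (\row_i coord (vbasis S) i x) => //.
rewrite addrC mA; congr (_ + _).
by under eq_bigr do rewrite mxE; apply: coord_vbasis.
Qed.

Lemma affine_param_factor tW tU (W U : {set 'rV[F]_n})
    (AW : 'M[F]_(tW, n)) bW (AU : 'M[F]_(tU, n)) bU :
    [set x *m AW + bW | x : 'rV_tW] = W -> [set x *m AU + bU | x : 'rV_tU] = U ->
    W \subset U ->
  exists (T : 'M[F]_(tW, tU)) (c : 'rV[F]_tU),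
    forall y, (y *m T + c) *m AU + bU = y *m AW + bW.
Proof.
move=> imW imU sWU.
have inU (y : 'rV_tW) : exists c : 'rV_tU, c *m AU + bU = y *m AW + bW.
  have : y *m AW + bW \in U.
    by apply: (subsetP sWU); rewrite -imW; apply/imsetP; exists y.
  by rewrite -imU => /imsetP [c _ ->]; exists c.
(* c := L_U^-1 (L_W 0) and row i of T := L_U^-1 (L_W e_i) - c. *)
have [c hc] := inU 0; rewrite mul0mx add0r in hc.
have [cf hcf] := fin_all_exists (fun i : 'I_tW => inU (delta_mx 0 i)).
pose T : 'M[F]_(tW, tU) := \matrix_i (cf i - c).
have hT : T *m AU = AW.
  apply/row_matrixP => i; rewrite row_mul rowK mulmxBl (rowE i AW).
  have e1 : cf i *m AU = 'e_i *m AW + bW - bU by rewrite -hcf addrK.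
  have e2 : c *m AU = bW - bU by rewrite -hc addrK.
  by rewrite e1 e2 opprB addrA subrK addrK.
by exists T, c => y; rewrite mulmxDl -mulmxA hT -addrA hc.
Qed.

End AffineParametrizations.

Lemma sum_affine_shares (R : pzRingType) k tW tU (T : 'M[R]_(tW, tU))
    (c : 'rV[R]_tU) (y : {ffun 'I_k.+1 -> 'rV[R]_tW}) :
  \sum_i [ffun i => y i *m T + (if i == ord0 then c else 0)] i
    = (\sum_i y i) *m T + c.
Proof.
under eq_bigr do rewrite ffunE.
rewrite big_split /= -mulmx_suml; congr (_ + _).
by rewrite big_ord_recl /= big1 ?addr0.
Qed.

Lemma CC_sum_affine_factor (F : finFieldType) Y k n tW tU
    (AW : 'M[F]_(tW, n)) (bW : 'rV[F]_n) (AU : 'M[F]_(tU, n)) (bU : 'rV[F]_n)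
    (T : 'M[F]_(tW, tU)) (c : 'rV[F]_tU) (f : 'rV[F]_n -> Y) :
    (forall y, (y *m T + c) *m AU + bU = y *m AW + bW) ->
  (CC (fun x : {ffun 'I_k.+1 -> 'rV_tW} => f ((\sum_i x i) *m AW + bW)%R)
   <= CC (fun x : {ffun 'I_k.+1 -> 'rV_tU} => f ((\sum_i x i) *m AU + bU)%R))%N.
Proof.
move=> hfac.
pose phi (i : 'I_k.+1) (y : 'rV_tW) := y *m T + (if i == ord0 then c else 0).
apply: (CC_precomp (phi := phi) (f 0)) => y.
by rewrite sum_affine_shares hfac.
Qed.

Lemma M_spec n (V : {set F2vec n}) (g : F2vec n -> 'F_2) :
    affine_subspace V ->
  exists t (A : 'M['F_2]_(t, n)) (b : F2vec n),
    affine_param V A b /\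
    M V g = CC (fun x : {ffun 'I_4 -> F2vec t} => g ((\sum_(i < 4) x i) *m A + b)).
Proof.
move=> [t [a [S [defV dimS]]]]; rewrite /M.
case: excluded_middle_informative => [h|[]]; last first.
  have [A [b hAb]] := affine_param_exists defV.
  by exists (\dim S), A, b; split=> //; rewrite dimS; exists a, S.
case: (constructive_indefinite_description _ h) => t' h1.
case: (constructive_indefinite_description _ h1) => A h2.
case: (constructive_indefinite_description _ h2) => b [_ hAb].
by exists t', A, b.
Qed.

Theorem lemma3p3 (n : nat) (U W : {set 'rV['F_2]_n}) (f : 'rV['F_2]_n -> 'F_2) :
  affine_subspace U -> affine_subspace W -> W \subset U ->
  (M W f <= M U f)%N.
Proof.
move=> affU affW sWU.
have [tU [AU [bU [[_ imU] ->]]]] := M_spec f affU.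
have [tW [AW [bW [[_ imW] ->]]]] := M_spec f affW.
have [T [c hfac]] := affine_param_factor imW imU sWU.
exact: CC_sum_affine_factor hfac.
Qed.
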